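(* Let $\|\cdot\|$ be a strictly convex norm on $\mathbb{R}^n$ that is continuously differentiable on $\mathbb{R}^n\setminus\{0\}$, with gradient $N(x)$ at $x\ne0$, and set $h(x,y)=\|y\|-\langle y,N(x)\rangle$ for $x\neq 0$, and $h(0,z)=0$ for all $z$. Suppose $\|\cdot\|$ is geometrically convex with constants $r>0$, $\Lambda>2$, i.e. $$\Lambda\, h(x,x+y)\le h(x,x+2y)\quad\text{for all } x\neq0,\ \|y\|\le r\|x\|.$$ Then for all $x\neq 0$ and $\|y\|\le r\|x\|$, $$h(x,x+2y)\le \frac{\Lambda}{\Lambda-2}\,h(x+2y,x).$$ Equivalently, if $x\ne0$ and $\|z-x\|\le 2r\|x\|$, then $h(x,z)\le \frac{\Lambda}{\Lambda-2}h(z,x)$.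
   Context: $\langle\cdot,\cdot\rangle$ is the Euclidean inner product. Strict convexity of the norm means: if $x,y\neq0$ and $\|x+y\|=\|x\|+\|y\|$, then $y=\alpha x$ for some $\alpha>0$. *)

From mathcomp Require Import all_boot all_order all_algebra.
From mathcomp Require Import reals.
Set Implicit Arguments. Unset Strict Implicit. Unset Printing Implicit Defensive.
Import Order.TTheory GRing.Theory Num.Theory.
Local Open Scope ring_scope.

Definition dotv (R : realType) (n : nat) (x y : 'rV[R]_n) : R :=
  \sum_(i < n) x 0 i * y 0 i.

Definition enorm (R : realType) (n : nat) (x : 'rV[R]_n) : R :=
  Num.sqrt (dotv x x).

Definition is_norm (R : realType) (n : nat) (nrm : 'rV[R]_n -> R) : Prop :=
  (forall x, 0 <= nrm x) /\
  (forall x, nrm x = 0 -> x = 0) /\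
  (forall (a : R) x, nrm (a *: x) = `|a| * nrm x) /\
  (forall x y, nrm (x + y) <= nrm x + nrm y).

Definition strictly_convex (R : realType) (n : nat) (nrm : 'rV[R]_n -> R) : Prop :=
  forall x y, x != 0 -> y != 0 -> nrm (x + y) = nrm x + nrm y ->
    exists a : R, 0 < a /\ y = a *: x.

Definition has_gradient_at (R : realType) (n : nat) (f : 'rV[R]_n -> R)
    (g : 'rV[R]_n) (x : 'rV[R]_n) : Prop :=
  forall eps : R, 0 < eps -> exists delta : R, 0 < delta /\
    forall v, enorm v < delta ->
      `|f (x + v) - f x - dotv v g| <= eps * enorm v.

Definition continuous_at_vec (R : realType) (n : nat) (F : 'rV[R]_n -> 'rV[R]_n)
    (x : 'rV[R]_n) : Prop :=
  forall eps : R, 0 < eps -> exists delta : R, 0 < delta /\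
    forall z, enorm (z - x) < delta -> enorm (F z - F x) < eps.

Definition C1_gradient_away0 (R : realType) (n : nat) (nrm : 'rV[R]_n -> R)
    (N : 'rV[R]_n -> 'rV[R]_n) : Prop :=
  forall x, x != 0 -> has_gradient_at nrm (N x) x /\ continuous_at_vec N x.

Definition hfun (R : realType) (n : nat) (nrm : 'rV[R]_n -> R)
    (N : 'rV[R]_n -> 'rV[R]_n) (x y : 'rV[R]_n) : R :=
  if x == 0 then 0 else nrm y - dotv y (N x).

Definition geometrically_convex (R : realType) (n : nat) (nrm : 'rV[R]_n -> R)
    (N : 'rV[R]_n -> 'rV[R]_n) (r Lam : R) : Prop :=
  forall x y, x != 0 -> nrm y <= r * nrm x ->
    Lam * hfun nrm N x (x + y) <= hfun nrm N x (x + 2%:R *: y).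

(* Write z = x + 2y. The gradient N of a norm satisfies <w, N u> <= ||w||
   and <u, N u> = ||u||, so h(x, z) - 2 h(x, x + y) = ||z|| + ||x|| - 2 ||x + y||.
   Applying the dual bound at z to x + y = z - y gives
   h(z, x) >= ||z|| + ||x|| - 2 ||x + y||, hence
   h(z, x) >= h(x, z) - 2 h(x, x + y) >= (1 - 2 / Lam) h(x, z)
   by geometric convexity. *)

From mathcomp Require Import all_boot all_order all_algebra.
From mathcomp Require Import reals.
From mathcomp Require Import ring lra.
Import Order.TTheory GRing.Theory Num.Theory.
Set Implicit Arguments.
Unset Strict Implicit.
Unset Printing Implicit Defensive.
Local Open Scope ring_scope.

Section Gradient.
Variables (R : realType) (n : nat).
Implicit Types (x y w g : 'rV[R]_n).

Lemma dotvDl x y g : dotv (x + y) g = dotv x g + dotv y g.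
Proof. by rewrite /dotv -big_split; apply: eq_bigr => i _; rewrite mxE mulrDl. Qed.

Lemma dotvZl (a : R) x g : dotv (a *: x) g = a * dotv x g.
Proof. by rewrite /dotv mulr_sumr; apply: eq_bigr => i _; rewrite mxE mulrA. Qed.

Lemma dotvNl x g : dotv (- x) g = - dotv x g.
Proof. by rewrite -scaleN1r dotvZl mulN1r. Qed.

Lemma enorm_ge0 x : 0 <= enorm x.
Proof. exact: sqrtr_ge0. Qed.

Lemma enormZ (a : R) x : 0 <= a -> enorm (a *: x) = a * enorm x.
Proof.
move=> a_ge0; rewrite /enorm dotvZl.
have -> : dotv x (a *: x) = a * dotv x x.
  by rewrite /dotv mulr_sumr; apply: eq_bigr => i _; rewrite mxE mulrCA.
by rewrite mulrA -expr2 sqrtrM ?sqr_ge0 // sqrtr_sqr ger0_norm.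
Qed.

Lemma has_gradient_dotv_le (f : 'rV[R]_n -> R) g x w (c : R) :
  has_gradient_at f g x ->
  (forall t : R, 0 < t -> t <= 1 -> f (x + t *: w) - f x <= t * c) ->
  dotv w g <= c.
Proof.
move=> grad quot; apply/ler_addgt0Pr => eps eps_gt0.
set E := enorm w; have E_ge0 : 0 <= E by exact: enorm_ge0.
have E1_gt0 : 0 < E + 1 by lra.
have [d [d_gt0 near_x]] := grad (eps / (E + 1)) (divr_gt0 eps_gt0 E1_gt0).
set t := Num.min 1 (d / (E + 1)).
have t_gt0 : 0 < t by rewrite lt_min ltr01 divr_gt0.
have t_le1 : t <= 1 by rewrite ge_min lexx.
have t_le : t <= d / (E + 1) by rewrite ge_min lexx orbT.
have etw : enorm (t *: w) = t * E by rewrite enormZ ?ltW.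
have small : enorm (t *: w) < d.
  have : t * E <= d / (E + 1) * E by rewrite ler_wpM2r.
  have : d / (E + 1) * E < d by rewrite mulrAC ltr_pdivrMr // ltr_pM2l //; lra.
  by rewrite etw; lra.
have := near_x _ small; rewrite dotvZl etw ler_norml => /andP [lo _].
have := quot t t_gt0 t_le1.
have epsE : eps / (E + 1) * E <= eps by rewrite mulrAC ler_pdivrMr //; nra.
move=> up; have : t * dotv w g <= t * (c + eps / (E + 1) * E) by lra.
by rewrite ler_pM2l // => ?; lra.
Qed.

End Gradient.

Section NormGradient.
Variables (R : realType) (n : nat) (nrm : 'rV[R]_n -> R) (N : 'rV[R]_n -> 'rV[R]_n).
Hypothesis nrm_norm : is_norm nrm.
Hypothesis N_grad : forall u, u != 0 -> has_gradient_at nrm (N u) u.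
Implicit Types (u v w x y : 'rV[R]_n).

Let nrmZ (a : R) w : nrm (a *: w) = `|a| * nrm w.
Proof. by case: nrm_norm => _ [_ []]. Qed.

Let nrmD v w : nrm (v + w) <= nrm v + nrm w.
Proof. by case: nrm_norm => _ [_ []]. Qed.

Lemma nrm0 : nrm 0 = 0.
Proof. by rewrite -(scale0r (0 : 'rV[R]_n)) nrmZ normr0 mul0r. Qed.

Lemma norm_gradient_dual u w : u != 0 -> dotv w (N u) <= nrm w.
Proof.
move=> u_neq0; apply: (has_gradient_dotv_le (N_grad u_neq0)) => t t_gt0 _.
by have := nrmD u (t *: w); rewrite nrmZ gtr0_norm //; lra.
Qed.

(* Euler's identity for the positively 1-homogeneous function nrm. *)
Lemma norm_gradient_self u : u != 0 -> dotv u (N u) = nrm u.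
Proof.
move=> u_neq0; apply/eqP; rewrite eq_le norm_gradient_dual //=.
suff : dotv (- u) (N u) <= - nrm u by rewrite dotvNl; lra.
apply: (has_gradient_dotv_le (N_grad u_neq0)) => t t_gt0 t_le1.
have -> : u + t *: - u = (1 - t) *: u by rewrite scalerBl scale1r scalerN.
by rewrite nrmZ ger0_norm; lra.
Qed.

Lemma hfun_double_sub x y : x != 0 ->
  hfun nrm N x (x + 2%:R *: y) - 2%:R * hfun nrm N x (x + y) =
    nrm (x + 2%:R *: y) + nrm x - 2%:R * nrm (x + y).
Proof.
move=> x_neq0; rewrite /hfun (negbTE x_neq0) !dotvDl dotvZl.
by rewrite norm_gradient_self //; ring.
Qed.

Lemma hfun_double_sub_le x y : x != 0 ->
  hfun nrm N x (x + 2%:R *: y) - 2%:R * hfun nrm N x (x + y) <=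
    hfun nrm N (x + 2%:R *: y) x.
Proof.
move=> x_neq0; rewrite hfun_double_sub //.
set z := x + 2%:R *: y.
have x_z : x + z = 2%:R *: (x + y) by rewrite /z scalerDr !scaler_nat !mulr2n addrA.
rewrite /hfun; have [z0|z_neq0] := eqVneq z 0.
  have := congr1 nrm x_z; rewrite z0 nrm0 addr0 nrmZ ger0_norm //; lra.
have := norm_gradient_dual (x + y) z_neq0; rewrite dotvDl.
by have := norm_gradient_self z_neq0; rewrite {1}/z dotvDl dotvZl; lra.
Qed.

End NormGradient.

Lemma ler_doubling_bounds (R : realType) (Lam a b c : R) :
  2%:R < Lam -> Lam * a <= b -> b - 2%:R * a <= c -> b <= Lam / (Lam - 2%:R) * c.
Proof.
move=> Lam_gt2 ab abc; rewrite mulrAC ler_pdivlMr; last lra.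
have : Lam * (b - 2%:R * a) <= Lam * c by rewrite ler_pM2l //; lra.
nra.
Qed.

Theorem lemma4p10 (R : realType) (n : nat) (nrm : 'rV[R]_n -> R)
    (N : 'rV[R]_n -> 'rV[R]_n) (r Lam : R) :
  is_norm nrm -> strictly_convex nrm -> C1_gradient_away0 nrm N ->
  0 < r -> 2%:R < Lam -> geometrically_convex nrm N r Lam ->
  forall x y : 'rV[R]_n, x != 0 -> nrm y <= r * nrm x ->
    hfun nrm N x (x + 2%:R *: y) <=
      Lam / (Lam - 2%:R) * hfun nrm N (x + 2%:R *: y) x.
Proof.
move=> nrm_norm _ C1 _ Lam_gt2 geoconv x y x_neq0 y_small.
have N_grad u : u != 0 -> has_gradient_at nrm (N u) u by move=> /C1 [].
apply: (ler_doubling_bounds Lam_gt2 (geoconv x y x_neq0 y_small)).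
exact: hfun_double_sub_le.
Qed.
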